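(* For every $r>2$ there exists a constant $c$, independent of $N\ge2$ and $d\ge1$, such that for any random variables $Q_1,\dots,Q_N$ each of which (marginally) has the $\chi^2(d)$ distribution, \[ \mathbb P\Big(\max_{1\le i\le N}Q_i>r\log N\Big)\le\Big(\frac1N\Big)^{(r-2)/4}e^{cd}. \] *)

From HB Require Import structures.
From mathcomp Require Import all_boot all_order all_algebra.
From mathcomp Require Import all_classical all_reals all_analysis.
Set Implicit Arguments. Unset Strict Implicit. Unset Printing Implicit Defensive.
Import Order.TTheory GRing.Theory Num.Theory.
Local Open Scope classical_set_scope.
Local Open Scope ring_scope.

Definition chi2_kernel (R : realType) (d : nat) (x : R) : R :=
  if 0 < x then x `^ (d%:R / 2 - 1) * expR (- x / 2) else 0.

(* Normalizing constant (= 2^(d/2) Gamma(d/2)). *)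
Definition chi2_norm (R : realType) (d : nat) : R :=
  fine (\int[@lebesgue_measure R]_(x in [set: R]) (chi2_kernel d x)%:E)%E.

Definition chi2_pdf (R : realType) (d : nat) (x : R) : R :=
  chi2_kernel d x / chi2_norm R d.

Definition has_chi2_distribution (dT : measure_display) (T : measurableType dT)
    (R : realType) (P : probability T R) (d : nat) (X : {RV P >-> R}) : Prop :=
  forall A : set R, measurable A ->
    distribution P X A = (\int[@lebesgue_measure R]_(x in A) (chi2_pdf d x)%:E)%E.
Arguments has_chi2_distribution {dT T R} P d%_nat X.

From HB Require Import structures.
From mathcomp Require Import all_boot all_order all_algebra.
From mathcomp Require Import all_classical all_reals all_analysis.
From mathcomp Require Import measurable_realfun.
From mathcomp.algebra_tactics Require Import ring lra.
(* Shifting the tail integral of X ~ chi^2(d) by b gives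
   P(X >= a + b) <= ((a + b)/a)^(d/2) e^(-b/2) P(X >= a): on [a, oo) the density
   ratio f(y + b)/f(y) = ((y + b)/y)^(d/2 - 1) e^(-b/2), and (y + b)/y <= (a + b)/a.
   Splitting r log N = a + b with a = (r - 2)/2 log N and b = (r + 2)/2 log N, the
   union bound over the N variables gives
   N (2r/(r - 2))^(d/2) N^(-(r + 2)/4) = N^(-(r - 2)/4) e^(c d),
   with c = log(2r/(r - 2))/2. *)

Set Implicit Arguments.
Unset Strict Implicit.
Unset Printing Implicit Defensive.
Import Order.TTheory GRing.Theory Num.Theory.
Import numFieldNormedType.Exports.
Local Open Scope classical_set_scope.
Local Open Scope ring_scope.

Section shift_integral.
Variable R : realType.

Lemma ge0_integral_itvcy_shift (G : R -> R) a b :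
  {within `[a + b, +oo[, continuous G} -> {in `]a + b, +oo[, forall x, 0 <= G x} ->
  (\int[lebesgue_measure]_(x in `[(a + b)%R, +oo[) (G x)%:E =
   \int[lebesgue_measure]_(x in `[a, +oo[) (G (x + b))%:E)%E.
Proof.
move=> cG G0; have shift1 : (+%R^~ b)^`()%classic = cst 1.
  by apply/funext => x; rewrite derive1E deriveD // derive_id derive_cst addr0.
rewrite (@increasing_ge0_integration_by_substitutiony R (+%R^~ b) G a) //.
- by apply: eq_integral => x _; rewrite shift1 /= mulr1.
- by move=> x y _ _ /=; rewrite ltrD2r.
- by rewrite shift1 => x _; exact: cvg_cst.
- by rewrite shift1; exact: is_cvg_cst.
- by rewrite shift1; exact: is_cvg_cst.
- split; first by move=> x _; apply: derivableD.
  by apply: cvg_at_right_filter; apply: cvgD; [exact: cvg_id | exact: cvg_cst].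
- exact: cvg_addrr.
Qed.

End shift_integral.

Section chi2_density.
Variables (R : realType) (d : nat).
Implicit Types x y a b : R.

Lemma chi2_kernel_ge0 x : 0 <= chi2_kernel d x.
Proof.
by rewrite /chi2_kernel; case: ifP => // _; rewrite mulr_ge0 ?powR_ge0 ?expR_ge0.
Qed.

Lemma chi2_norm_ge0 : 0 <= chi2_norm R d.
Proof.
by apply: fine_ge0; apply: integral_ge0 => x _; rewrite lee_fin chi2_kernel_ge0.
Qed.

Lemma chi2_pdf_ge0 x : 0 <= chi2_pdf d x.
Proof. by rewrite divr_ge0 ?chi2_kernel_ge0 ?chi2_norm_ge0. Qed.

Lemma chi2_pdf_gt0E x : 0 < x ->
  chi2_pdf d x = expR ((d%:R / 2 - 1) * ln x - x / 2) / chi2_norm R d.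
Proof.
by move=> x0; rewrite /chi2_pdf /chi2_kernel x0 /powR gt_eqF // -expRD mulNr.
Qed.

Lemma continuous_chi2_pdf x : 0 < x -> {for x, continuous (chi2_pdf d)}.
Proof.
move=> x0.
pose g y := expR ((d%:R / 2 - 1) * ln y - y / 2) / chi2_norm R d.
have gE : {near x, g =1 chi2_pdf d}.
  by near=> y; rewrite chi2_pdf_gt0E //; near: y; exact: lt_nbhsr.
apply: cvg_trans (near_eq_cvg gE) _; rewrite chi2_pdf_gt0E // /g.
apply: cvgMl; apply: continuous_comp; last exact: continuous_expR.
apply: cvgB; last by apply: cvgMl; exact: cvg_id.
by apply: cvgMr; exact: continuous_ln.
Unshelve. all: by end_near. Qed.

Lemma within_continuous_chi2_pdf_shift a b : 0 < a -> 0 <= b ->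
  {within `[a, +oo[, continuous (fun y => chi2_pdf d (y + b))}.
Proof.
move=> a0 b0; apply: continuous_in_subspaceT => y.
rewrite inE /= in_itv /= andbT => ay.
apply: (@continuous_comp _ _ _ (+%R^~ b) (chi2_pdf d) y).
  by apply: cvgD; [exact: cvg_id | exact: cvg_cst].
by apply: continuous_chi2_pdf; lra.
Qed.

Lemma within_continuous_chi2_pdf a : 0 < a ->
  {within `[a, +oo[, continuous (chi2_pdf d)}.
Proof.
move=> a0; apply: continuous_in_subspaceT => y; rewrite inE /= in_itv /= andbT => ay.
by apply: continuous_chi2_pdf; lra.
Qed.

Lemma chi2_pdf_shift_le a b y : 0 < a -> 0 <= b -> a <= y ->
  chi2_pdf d (y + b) <= expR (d%:R / 2 * ln ((a + b) / a) - b / 2) * chi2_pdf d y.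
Proof.
move=> a0 b0 ay; have y0 : 0 < y by lra.
rewrite !chi2_pdf_gt0E ?mulrA; [|lra|lra].
rewrite ler_wpM2r ?invr_ge0 ?chi2_norm_ge0 // -expRD ler_expR.
have ratio_ge1 : 1 <= y / a by rewrite ler_pdivlMr // mul1r.
have ln_incr : ln y <= ln (y + b) by rewrite ler_ln ?posrE; lra.
have ln_ratio : ln (y + b) <= ln ((a + b) / a) + ln y.
  have ab0 : 0 < (a + b) / a by rewrite divr_gt0 //; lra.
  have aby0 : 0 < (a + b) / a * y by rewrite mulr_gt0.
  rewrite -lnM ?posrE // ler_ln ?posrE //; last lra.
  have -> : (a + b) / a * y = y + b * (y / a) by field; lra.
  by rewrite lerD2l ler_peMr.
have q0 : 0 <= d%:R / 2 :> R by rewrite divr_ge0.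
move: q0 ln_incr ln_ratio; set q := d%:R / 2; nra.
Qed.

Lemma chi2_tail_integral_shift_le a b : 0 < a -> 0 <= b ->
  (\int[lebesgue_measure]_(x in `[(a + b)%R, +oo[) (chi2_pdf d x)%:E <=
   (expR (d%:R / 2 * ln ((a + b) / a) - b / 2))%:E *
   \int[lebesgue_measure]_(x in `[a, +oo[) (chi2_pdf d x)%:E)%E.
Proof.
move=> a0 b0; set K := expR _.
rewrite ge0_integral_itvcy_shift; last 2 first.
- by apply: within_continuous_chi2_pdf; lra.
- by move=> x _; exact: chi2_pdf_ge0.
rewrite -ge0_integralZl_EFin ?expR_ge0 //; last 2 first.
- by move=> x _; rewrite lee_fin chi2_pdf_ge0.
- apply/measurable_EFinP; apply: subspace_continuous_measurable_fun => //.
  exact: within_continuous_chi2_pdf.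
apply: ge0_le_integral => //.
- by move=> x _; rewrite lee_fin chi2_pdf_ge0.
- apply/measurable_EFinP; apply: subspace_continuous_measurable_fun => //.
  exact: within_continuous_chi2_pdf_shift.
- apply: measurable_funeM; apply/measurable_EFinP.
  apply: subspace_continuous_measurable_fun => //.
  exact: within_continuous_chi2_pdf.
- move=> x; rewrite /= in_itv /= andbT => ax.
  by rewrite -EFinM lee_fin chi2_pdf_shift_le.
Qed.

Lemma chi2_tail_le (dT : measure_display) (T : measurableType dT)
    (P : probability T R) (X : {RV P >-> R}) a b :
  has_chi2_distribution P d X -> 0 < a -> 0 <= b ->
  (P (X @^-1` `[(a + b)%R, +oo[) <=
   (expR (d%:R / 2 * ln ((a + b) / a) - b / 2))%:E)%E.
Proof.
move=> hX a0 b0; rewrite -[leRHS]mule1.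
have -> : P (X @^-1` `[a + b, +oo[) = distribution P X `[a + b, +oo[ by [].
rewrite hX //; apply: le_trans; first exact: chi2_tail_integral_shift_le.
rewrite -hX // lee_wpmul2l ?lee_fin ?expR_ge0 //.
by apply: probability_le1; exact: measurable_itv.
Qed.

End chi2_density.

Section union_bound.
Variables (dT : measure_display) (T : measurableType dT) (R : realType).

Lemma bigmaxe_gt_bigcup n (f : 'I_n -> T -> R) a :
  [set t | (a%:E < \big[Order.max/-oo]_(i < n) (f i t)%:E)%E] =
  \bigcup_(i in [set: 'I_n]) f i @^-1` `]a, +oo[.
Proof.
apply/seteqP; split => t /=.
- case/bigmax_gtP => [//|[i _ ai]]; exists i => //=.
  by rewrite in_itv /= andbT -lte_fin.
- move=> [i _]; rewrite /= in_itv /= andbT => ai.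
  by apply/bigmax_gtP; right; exists i; rewrite ?lte_fin.
Qed.

Lemma measure_bigmaxe_gt_le (mu : {measure set T -> \bar R}) n
    (f : 'I_n -> {mfun T >-> R}) a :
  (mu [set t | a%:E < \big[Order.max/-oo]_(i < n) (f i t)%:E] <=
   \sum_(i < n) mu (f i @^-1` `]a, +oo[))%E.
Proof.
have mf i : measurable (f i @^-1` `]a, +oo[).
  by apply: measurable_funPTI; exact: measurable_itv.
have -> : \sum_(i < n) mu (f i @^-1` `]a, +oo[) =
          \sum_(i \in [set: 'I_n]) mu (f i @^-1` `]a, +oo[).
  have -> : [set: 'I_n] = [set` enum 'I_n].
    by apply/seteqP; split => i //= _; rewrite mem_enum.
  by rewrite -fsbig_seq ?enum_uniq // big_enum.
rewrite bigmaxe_gt_bigcup; apply: content_sub_fsum => //; first exact: finite_finset.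
by apply: fin_bigcup_measurable => //; exact: finite_finset.
Qed.

End union_bound.

Theorem lemma5 (R : realType) (r : R) (hr : 2 < r) :
  exists c : R,
    forall (N d : nat), (2 <= N)%N -> (1 <= d)%N ->
    forall (dT : measure_display) (T : measurableType dT) (P : probability T R)
           (Q : 'I_N -> {RV P >-> R}),
      (forall i, has_chi2_distribution P d (Q i)) ->
      (P [set t | ((r * ln N%:R)%:E < \big[Order.max/-oo]_(i < N) (Q i t)%:E)%E]
        <= ((N%:R^-1) `^ ((r - 2) / 4) * expR (c * d%:R))%:E)%E.
Proof.
exists (ln (2 * r / (r - 2)) / 2) => N d N2 _ dT T P Q hQ.
have N0 : 0 < N%:R :> R by rewrite ltr0n (leq_trans _ N2).
have L0 : 0 < ln N%:R :> R by rewrite ln_gt0 // ltr1n.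
set L := ln N%:R in L0 *.
set a := (r - 2) / 2 * L; set b := (r + 2) / 2 * L.
have a0 : 0 < a by rewrite mulr_gt0 // divr_gt0 //; lra.
have b0 : 0 <= b by rewrite mulr_ge0 // ?divr_ge0; lra.
have tailQ i : (P (Q i @^-1` `](r * L)%R, +oo[) <=
                (expR (d%:R / 2 * ln ((a + b) / a) - b / 2))%:E)%E.
  apply: le_trans (chi2_tail_le (hQ i) a0 b0).
  have -> : r * L = a + b by rewrite /a /b; field.
  apply: le_measure; rewrite ?inE;
    try by apply: measurable_funPTI; exact: measurable_itv.
  by move=> t /=; rewrite !in_itv /= !andbT; apply: ltW.
apply: le_trans (measure_bigmaxe_gt_le P Q (r * L)) _.
apply: le_trans; first by apply: lee_sum => i _; exact: tailQ.
rewrite sumEFin sumr_const card_ord lee_fin.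
have ratioE : (a + b) / a = 2 * r / (r - 2).
  rewrite /a /b; field; apply/andP; split; [lra | exact: lt0r_neq0].
have NE : N%:R = expR L :> R by rewrite lnK ?posrE.
rewrite ratioE -[leLHS]mulr_natl [in leLHS]NE -expRD.
rewrite /powR invr_eq0 gt_eqF // lnV ?posrE // -/L -expRD ler_expR.
rewrite /b; lra.
Qed.
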